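(* A value function $\mathfrak I:X\times\mathbb B(X)\to\mathbb R$ satisfies (Dic) $\mathfrak I_x(x)=\mathfrak I_x(\overline x)=1$ for all $x\in X$, (Dum) $\mathfrak I_x(f)=0$ whenever $x\notin\mathrm{dep}(f)$, and cofactor-additivity, if and only if $\mathfrak I=\mathbf I$, i.e. $\mathfrak I_x(f)=\mathbb E[\mathrm D_xf]$ for all $x,f$.
   Context: $X$ is a fixed finite set of variables; $\mathbb B(X)$ is the set of Boolean functions $\{0,1\}^X\to\{0,1\}$; a variable $x$ also denotes $\mathbf u\mapsto\mathbf u(x)$ and $\overline f$ is negation. $f_{z/c}$ is the cofactor of $f$ with $z$ fixed to $c$ (regarded again as an element of $\mathbb B(X)$ not depending on $z$). $\mathrm{dep}(f)=\{x: f_{x/1}\ne f_{x/0}\}$; $\mathrm D_xf=f_{x/1}\oplus f_{x/0}$; $\mathbb E$ is the expectation under the uniform distribution on $\{0,1\}^X$. A value function is any map $\mathfrak I:X\times\mathbb B(X)\to\mathbb R$, $(x,f)\mapsto\mathfrak I_x(f)$. It is cofactor-additive if for all $f\in\mathbb B(X)$ and all variables $x\ne z$: $\mathfrak I_x(f)=\tfrac12\mathfrak I_x(f_{z/0})+\tfrac12\mathfrak I_x(f_{z/1})$. *)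

From mathcomp Require Import all_boot all_order all_algebra.
From mathcomp Require Import reals.
Set Implicit Arguments. Unset Strict Implicit. Unset Printing Implicit Defensive.
Import Order.TTheory GRing.Theory Num.Theory.
Local Open Scope ring_scope.

Definition assign (X : finType) := {ffun X -> bool}.
Definition BF (X : finType) := {ffun assign X -> bool}.

Definition bvar (X : finType) (x : X) : BF X := [ffun u : assign X => u x].
Definition bneg (X : finType) (f : BF X) : BF X := [ffun u => ~~ f u].
Definition upd (X : finType) (u : assign X) (z : X) (c : bool) : assign X :=
  [ffun y => if y == z then c else u y].
Definition cofactor (X : finType) (f : BF X) (z : X) (c : bool) : BF X :=
  [ffun u => f (upd u z c)].
Definition dep (X : finType) (f : BF X) : {set X} :=
  [set x | cofactor f x true != cofactor f x false].
Definition Dx (X : finType) (x : X) (f : BF X) : BF X :=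
  [ffun u => cofactor f x true u (+) cofactor f x false u].
Definition Exp (R : realType) (X : finType) (g : BF X) : R :=
  (\sum_(u : assign X) (g u)%:R) / #|{: assign X}|%:R.

Definition dic (R : realType) (X : finType) (I : X -> BF X -> R) : Prop :=
  forall x : X, I x (bvar x) = 1 /\ I x (bneg (bvar x)) = 1.
Definition dum (R : realType) (X : finType) (I : X -> BF X -> R) : Prop :=
  forall (x : X) (f : BF X), x \notin dep f -> I x f = 0.
Definition cofactor_additive (R : realType) (X : finType) (I : X -> BF X -> R) : Prop :=
  forall (f : BF X) (x z : X), x != z ->
    I x f = 2^-1 * I x (cofactor f z false) + 2^-1 * I x (cofactor f z true).

From Pilot Require Import Defs.
From mathcomp Require Import all_boot all_order all_algebra.
From mathcomp Require Import reals.
Set Implicit Arguments. Unset Strict Implicit. Unset Printing Implicit Defensive.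
Import Order.TTheory GRing.Theory Num.Theory.
Local Open Scope ring_scope.

(* [cofactor] also names the matrix cofactor of all_algebra. *)
Local Notation cofactor := Defs.cofactor.

(* The proof splits into existence and uniqueness.
   - Existence: E[D_x -] satisfies (Dic) and (Dum) because D_x x, D_x (~x) are
     the constant true and D_x f is the constant false when x is not in dep(f);
     it is cofactor-additive because D_x commutes with cofactors in z <> x and
     the uniform expectation is the average of the two cofactor expectations.
   - Uniqueness: two value functions satisfying the three axioms agree.  By
     induction on #|dep f \ {x}|: if this set is empty, f only depends on x,
     hence is constant, x or ~x, and (Dic)/(Dum) fix the value; otherwise pick
     z in dep f \ {x}, whose cofactors have strictly fewer relevant variables,
     and conclude by cofactor-additivity. *)

Section BooleanFunctions.
Variable X : finType.
Implicit Types (u v : assign X) (f g : BF X) (x y z : X) (b c : bool).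

Lemma upd_id u z : upd u z (u z) = u.
Proof. by apply/ffunP=> y; rewrite ffunE; case: eqP => // ->. Qed.

Lemma upd_upd u z c c' : upd (upd u z c) z c' = upd u z c'.
Proof. by apply/ffunP=> y; rewrite !ffunE; case: eqP. Qed.

Lemma upd_comm u y z b c : y != z ->
  upd (upd u y b) z c = upd (upd u z c) y b.
Proof.
move=> yz; apply/ffunP=> w; rewrite !ffunE.
by case: (eqVneq w z) => [->|//]; rewrite eq_sym (negbTE yz).
Qed.

Lemma cofactor_same f z b c : cofactor (cofactor f z c) z b = cofactor f z c.
Proof. by apply/ffunP=> u; rewrite !ffunE upd_upd. Qed.

Lemma cofactor_comm f y z b c : y != z ->
  cofactor (cofactor f z c) y b = cofactor (cofactor f y b) z c.
Proof. by move=> yz; apply/ffunP=> u; rewrite !ffunE upd_comm. Qed.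

Lemma Dx_cofactor f x z c : x != z ->
  Dx x (cofactor f z c) = cofactor (Dx x f) z c.
Proof.
move=> xz; apply/ffunP=> u; rewrite !ffunE.
by rewrite (upd_comm u true c xz) (upd_comm u false c xz).
Qed.

Lemma dep_cofactor f z c : dep (cofactor f z c) \subset dep f :\ z.
Proof.
apply/subsetP => y; rewrite !inE.
case: (eqVneq y z) => [->|yz] /=; first by rewrite !cofactor_same eqxx.
apply: contra => /eqP E.
by rewrite (cofactor_comm f true c yz) (cofactor_comm f false c yz) E.
Qed.

Lemma card_dep_cofactor f x z c : z \in dep f :\ x ->
  (#|dep (cofactor f z c) :\ x| < #|dep f :\ x|)%N.
Proof.
move=> zD; apply: leq_ltn_trans (proper_card (properD1 zD)).
apply: subset_leq_card; rewrite setDDl setUC -setDDl.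
by apply: setSD; apply: dep_cofactor.
Qed.

Lemma nodep_upd f z u c : z \notin dep f -> f (upd u z c) = f u.
Proof.
rewrite inE negbK => /eqP E.
have cofE b : cofactor f z b u = cofactor f z false u by case: b; rewrite ?E.
by move: (cofE c) (cofE (u z)); rewrite !ffunE upd_id => -> ->.
Qed.

Lemma eq_on_dep f u v : {in dep f, u =1 v} -> f u = f v.
Proof.
have [n] := ubnP #|[set y | u y != v y]|; elim: n u => // n IH u.
rewrite ltnS => Hn uv.
case: (pickP [pred y | u y != v y]) => [y /= uy | same]; last first.
  by congr (f _); apply/ffunP=> y; apply/eqP/negbFE/same.
have yd : y \notin dep f by apply: contra uy => /uv ->.
rewrite -(nodep_upd u (v y) yd); apply: IH; last first.
  by move=> w wd; rewrite ffunE; case: eqP => [->|_] //; apply: uv.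
have sub : [set w | upd u y (v y) w != v w] \subset [set w | u w != v w] :\ y.
  by apply/subsetP=> w; rewrite !inE ffunE; case: (eqVneq w y) => [->|]; rewrite ?eqxx.
apply: leq_ltn_trans (subset_leq_card sub) _.
by move: Hn; rewrite (cardsD1 y) inE uy.
Qed.

Lemma dep_sub1_cases f x : dep f \subset [set x] ->
  [\/ x \notin dep f, f = bvar x | f = bneg (bvar x)].
Proof.
move=> sub; pose u0 : assign X := [ffun _ => false].
have fE u : f u = f (upd u0 x (u x)).
  apply: eq_on_dep => y /(subsetP sub); rewrite inE => /eqP ->.
  by rewrite ffunE eqxx.
have cofE c u : cofactor f x c u = f (upd u0 x c).
  by rewrite ffunE fE ffunE eqxx.
case Ht: (f (upd u0 x true)); case Hf: (f (upd u0 x false)).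
- by apply: Or31; rewrite inE negbK; apply/eqP/ffunP=> u; rewrite !cofE Ht Hf.
- by apply: Or32; apply/ffunP=> u; rewrite fE ffunE; case: (u x).
- by apply: Or33; apply/ffunP=> u; rewrite fE !ffunE; case: (u x); rewrite ?Ht ?Hf.
- by apply: Or31; rewrite inE negbK; apply/eqP/ffunP=> u; rewrite !cofE Ht Hf.
Qed.

Variable R : realType.
Implicit Type J : X -> BF X -> R.

Definition value_axioms J := dic J /\ dum J /\ cofactor_additive J.

Lemma value_axioms_ext (J1 J2 : X -> BF X -> R) :
  (forall x f, J1 x f = J2 x f) -> value_axioms J1 -> value_axioms J2.
Proof.
move=> E [d [m a]]; split; [|split].
- by move=> x; rewrite -!E; apply: d.
- by move=> x f xf; rewrite -E; apply: m.
- by move=> f x z xz; rewrite -!E; apply: a.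
Qed.

Lemma dic_dum_sub1 (J1 J2 : X -> BF X -> R) x f : dic J1 -> dum J1 -> dic J2 -> dum J2 ->
  dep f \subset [set x] -> J1 x f = J2 x f.
Proof.
move=> d1 m1 d2 m2 /dep_sub1_cases[xf|->|->].
- by rewrite m1 // m2.
- by case: (d1 x) => -> _; case: (d2 x) => -> _.
- by case: (d1 x) => _ ->; case: (d2 x) => _ ->.
Qed.

Lemma value_axioms_unique (J1 J2 : X -> BF X -> R) : value_axioms J1 -> value_axioms J2 ->
  forall x f, J1 x f = J2 x f.
Proof.
move=> [d1 [m1 a1]] [d2 [m2 a2]] x f.
have [n] := ubnP #|dep f :\ x|; elim: n f => // n IH f; rewrite ltnS => Hn.
have [D0 | [z zD]] := set_0Vmem (dep f :\ x).
  by apply: dic_dum_sub1 => //; rewrite -setD_eq0 D0.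
have xz : x != z by move: zD; rewrite !inE eq_sym => /andP[].
rewrite (a1 f x z xz) (a2 f x z xz) !IH //.
all: by apply: leq_trans Hn; apply: card_dep_cofactor.
Qed.

Lemma card_assign_neq0 : (#|{: assign X}|%:R : R) != 0.
Proof. by rewrite pnatr_eq0 -lt0n; apply/card_gt0P; exists [ffun _ => false]. Qed.

Lemma Exp_const b : Exp R ([ffun _ => b] : BF X) = b%:R.
Proof.
rewrite /Exp (eq_bigr (fun _ => b%:R)); last by move=> u _; rewrite ffunE.
by rewrite sumr_const -[_ *+ _]mulr_natr mulfK // card_assign_neq0.
Qed.

(* Pairing u with u flipped at z: summing both cofactors counts each
   assignment twice. *)
Lemma sum_cofactor g z :
  \sum_u ((cofactor g z false u)%:R : R) + \sum_u (cofactor g z true u)%:R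
  = 2 * \sum_u (g u)%:R.
Proof.
pose flip u := upd u z (~~ u z).
have flipK : involutive flip by move=> u; rewrite /flip upd_upd ffunE eqxx negbK upd_id.
rewrite -big_split (eq_bigr (fun u => (g u)%:R + (g (flip u))%:R)) /=; last first.
  by move=> u _; rewrite /flip !ffunE; case: (u z) (upd_id u z) => /= ->; rewrite // addrC.
rewrite big_split /= mulr_natl mulr2n; congr (_ + _).
by rewrite [RHS](reindex_inj (inv_inj flipK)).
Qed.

Lemma Exp_cofactor g z : Exp R g =
  2^-1 * Exp R (cofactor g z false) + 2^-1 * Exp R (cofactor g z true).
Proof.
rewrite /Exp -mulrDr -mulrDl sum_cofactor !mulrA mulVf ?mul1r //.
by rewrite pnatr_eq0.
Qed.

Lemma influence_axioms : value_axioms (fun x f => Exp R (Dx x f)).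
Proof.
split; [|split].
- move=> x; have DxE g : g = bvar x \/ g = bneg (bvar x) -> Dx x g = [ffun _ => true].
    by case=> ->; apply/ffunP=> u; rewrite !ffunE eqxx.
  by rewrite !DxE ?Exp_const; [|right|left].
- move=> x f; rewrite inE negbK => /eqP E.
  have -> : Dx x f = [ffun _ => false] by apply/ffunP=> u; rewrite /Dx E !ffunE addbb.
  exact: Exp_const.
- by move=> f x z xz; rewrite !Dx_cofactor //; apply: Exp_cofactor.
Qed.

End BooleanFunctions.

Theorem mainTheorem7 (R : realType) (X : finType) (I : X -> BF X -> R) :
  (dic I /\ dum I /\ cofactor_additive I) <->
  (forall (x : X) (f : BF X), I x f = Exp R (Dx x f)).
Proof.
split=> [axI | IE].
- exact: value_axioms_unique axI (@influence_axioms X R).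
- by apply: value_axioms_ext (@influence_axioms X R) => x f; rewrite IE.
Qed.
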